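(* Let $D$ be a diagram of a link $L$, let $n\ge3$ be odd, and let $c_1,\dots,c_n\in MG(L)$ be conjugates of elements $a_1,\dots,a_n\in A(D)$ respectively. Then $c_1c_2^{-1}c_3c_4^{-1}\cdots c_{n-1}^{-1}c_n=c_nc_{n-1}^{-1}c_{n-2}\cdots c_2^{-1}c_1$.
   Context: Let $L$ be an oriented classical link with diagram $D$; $A(D)$ is the set of arcs of $D$. At a crossing, $a_1$ denotes the overpassing arc, $a_2$ the underpassing arc on the right of $a_1$ (with respect to the orientation of $a_1$), $a_3$ the underpassing arc on the left of $a_1$. The medial group $MG(L)$ is the group generated by $A(D)$ subject to the relations (i) $c_1c_2^{-1}c_3=c_3c_2^{-1}c_1$ whenever $c_1,c_2,c_3$ are conjugates of elements of $A(D)$, and (ii) $a_1a_2a_1^{-1}=a_3$ at every crossing of $D$. *)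

From mathcomp Require Import all_boot.
Set Implicit Arguments. Unset Strict Implicit. Unset Printing Implicit Defensive.

(* Combinatorial data of an oriented link diagram D:
   a finite set of arcs A(D) and, for each crossing, the triple
   (a1, a2, a3) = (overpassing arc, underpassing arc on the right of a1,
   underpassing arc on the left of a1). *)
Record diagram := Diagram {
  darc : finType;
  crossings : seq (darc * darc * darc)
}.

(* Words in the free group on A(D): letters (true, a) = a, (false, a) = a^-1. *)
Definition word (D : diagram) := seq (bool * darc D).

Definition gen (D : diagram) (a : darc D) : word D := [:: (true, a)].

Definition winv (D : diagram) (w : word D) : word D :=
  rev (map (fun x => (~~ x.1, x.2)) w).

Definition conjw (D : diagram) (w : word D) (a : darc D) : word D :=
  w ++ gen a ++ winv w.

(* Equality in the medial group MG(L) = <A(D) | (i), (ii)>,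
   i.e. the congruence on words generated by free reduction and
   the relations (i), (ii). *)
Inductive mg_eq (D : diagram) : word D -> word D -> Prop :=
| mg_refl w : mg_eq w w
| mg_sym w v : mg_eq w v -> mg_eq v w
| mg_trans w v u : mg_eq w v -> mg_eq v u -> mg_eq w u
| mg_free u v (b : bool) (a : darc D) :
    mg_eq (u ++ [:: (b, a); (~~ b, a)] ++ v) (u ++ v)
| mg_medial u v (w1 w2 w3 : word D) (x1 x2 x3 : darc D) :
    let c1 := conjw w1 x1 in let c2 := conjw w2 x2 in let c3 := conjw w3 x3 in
    mg_eq (u ++ c1 ++ winv c2 ++ c3 ++ v) (u ++ c3 ++ winv c2 ++ c1 ++ v)
| mg_cross u v (a1 a2 a3 : darc D) :
    (a1, a2, a3) \in crossings D ->
    mg_eq (u ++ gen a1 ++ gen a2 ++ winv (gen a1) ++ v) (u ++ gen a3 ++ v).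

(* c_1 c_2^-1 c_3 ... c_n  (c_i inverted for even i, 1-indexed) *)
Definition alt_term (D : diagram) (c : nat -> word D) (i : nat) : word D :=
  if odd i then winv (c i) else c i.
Definition alt_prod (D : diagram) (n : nat) (c : nat -> word D) : word D :=
  flatten [seq alt_term c i | i <- iota 0 n].
Definition alt_prod_rev (D : diagram) (n : nat) (c : nat -> word D) : word D :=
  flatten [seq alt_term c i | i <- rev (iota 0 n)].

From mathcomp Require Import all_boot zify.
From Stdlib Require Import Setoid Morphisms.
Set Implicit Arguments. Unset Strict Implicit. Unset Printing Implicit Defensive.

(* Write P for an alternating product t_1 t_2^-1 t_3 ... t_m of conjugates of
   length m odd.  Such a P behaves like a single conjugate in the medial
   relation: x y^-1 P = P y^-1 x and y^-1 P u^-1 = u^-1 P y^-1 for conjugates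
   x, y, u.  Both identities follow together by induction on m, peeling off
   P = z v^-1 P' and moving letters across with the medial relation.  The
   reversal of P then follows by induction as well, moving x y^-1 across the
   rest of the product with the first identity. *)

Section MedialGroup.

Variable D : diagram.
Implicit Types (x y z u v r w : word D) (t : seq (word D)).

#[local] Hint Resolve mg_refl : core.

Lemma mg_eq_ctx x y u v : mg_eq x y -> mg_eq (u ++ x ++ v) (u ++ y ++ v).
Proof.
move=> H; elim: H u v => {x y}.
- by [].
- by move=> x y _ IH u v; apply: mg_sym.
- by move=> x y z _ IH1 _ IH2 u v; apply: mg_trans (IH1 u v) (IH2 u v).
- move=> u0 v0 b a u v; have := mg_free (u ++ u0) (v0 ++ v) b a.
  by rewrite -!catA.
- move=> u0 v0 w1 w2 w3 x1 x2 x3 c1 c2 c3 u v; rewrite /c1 /c2 /c3.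
  have := mg_medial (u ++ u0) (v0 ++ v) w1 w2 w3 x1 x2 x3.
  by cbv zeta; rewrite -!catA.
- move=> u0 v0 a1 a2 a3 Hc u v; have := mg_cross (u ++ u0) (v0 ++ v) Hc.
  by rewrite -!catA.
Qed.

#[local] Instance mg_eq_Equivalence : Equivalence (@mg_eq D).
Proof. by split; [exact: mg_refl | exact: mg_sym | exact: mg_trans]. Qed.

#[local] Instance cat_mg_eq_Proper :
  Proper (@mg_eq D ==> @mg_eq D ==> @mg_eq D) cat.
Proof.
move=> x x' Hx y y' Hy; transitivity (x' ++ y).
  by have := mg_eq_ctx [::] y Hx.
by have := mg_eq_ctx x' [::] Hy; rewrite !cats0.
Qed.

Lemma winv_cat x y : winv (x ++ y) = winv y ++ winv x.
Proof. by rewrite /winv map_cat rev_cat. Qed.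

Lemma winvK : involutive (@winv D).
Proof.
move=> x; rewrite /winv map_rev revK -map_comp -[RHS]map_id.
by apply: eq_map => -[b a] /=; rewrite negbK.
Qed.

Lemma mg_catwV w : mg_eq (w ++ winv w) [::].
Proof.
elim: w => [|[b a] w IH] //.
have -> : winv ((b, a) :: w) = winv w ++ [:: (~~ b, a)].
  by rewrite /winv /= rev_cons cats1.
rewrite -cat1s -catA (catA w) IH /=; exact: (mg_free [::] [::] b a).
Qed.

Lemma mg_catVw w : mg_eq (winv w ++ w) [::].
Proof. by rewrite -{2}(winvK w); apply: mg_catwV. Qed.

#[local] Instance winv_mg_eq_Proper : Proper (@mg_eq D ==> @mg_eq D) (@winv D).
Proof.
move=> x y Hxy; transitivity (winv x ++ x ++ winv y).
  transitivity (winv x ++ y ++ winv y); first by rewrite mg_catwV cats0.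
  by apply: cat_mg_eq_Proper => //; apply: cat_mg_eq_Proper => //; apply: mg_sym.
by rewrite catA mg_catVw.
Qed.

Definition is_conj w := exists v a, w = conjw v a.

Lemma medial_cat x y z r : is_conj x -> is_conj y -> is_conj z ->
  mg_eq (x ++ winv y ++ z ++ r) (z ++ winv y ++ x ++ r).
Proof.
move=> [w1 [a1 ->]] [w2 [a2 ->]] [w3 [a3 ->]].
exact: (mg_medial [::] r w1 w2 w3 a1 a2 a3).
Qed.

Lemma medial_winv_cat x y z r : is_conj x -> is_conj y -> is_conj z ->
  mg_eq (winv x ++ y ++ winv z ++ r) (winv z ++ y ++ winv x ++ r).
Proof.
move=> hx hy hz; have := winv_mg_eq_Proper (medial_cat [::] hz hy hx).
rewrite !cats0 !winv_cat !winvK -!catA => H.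
by have := cat_mg_eq_Proper H (mg_refl r); rewrite -!catA.
Qed.

Fixpoint alt_word (b : bool) t : word D :=
  if t is x :: t' then (if b then winv x else x) ++ alt_word (~~ b) t' else [::].

Lemma alt_word_cat b t1 t2 :
  alt_word b (t1 ++ t2) = alt_word b t1 ++ alt_word (b (+) odd (size t1)) t2.
Proof.
elim: t1 b => [|x t1 IH] b /=; first by rewrite addbF.
by rewrite IH catA addNb -addbN.
Qed.

Definition all_conj t := forall x, x \in t -> is_conj x.

Lemma all_conj_cons x t : all_conj (x :: t) -> is_conj x /\ all_conj t.
Proof.
by move=> ht; split=> [|y hy]; apply: ht; rewrite inE ?eqxx ?hy ?orbT.
Qed.

Lemma alt_word_medial k t : size t = k.*2.+1 -> all_conj t ->
  let P := alt_word false t in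
  (forall x y r, is_conj x -> is_conj y ->
     mg_eq (x ++ winv y ++ P ++ r) (P ++ winv y ++ x ++ r)) /\
  (forall y u r, is_conj y -> is_conj u ->
     mg_eq (winv y ++ P ++ winv u ++ r) (winv u ++ P ++ winv y ++ r)).
Proof.
elim: k t => [|k IH] [|z [|v t]] //= hs /all_conj_cons[hz ht].
  by rewrite cats0; split=> *; [apply: medial_cat | apply: medial_winv_cat].
have [hv {}ht] := all_conj_cons ht; move: hs => [hs].
have [A B] := IH t hs ht; set P := alt_word false t in A B *.
split=> [x y r hx hy | y u r hy hu]; rewrite -!catA.
  by rewrite medial_cat // A // B.
rewrite medial_winv_cat // B // A // B //.
by symmetry; rewrite A.
Qed.

Lemma alt_word_rev k t : size t = k.*2.+1 -> all_conj t ->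
  mg_eq (alt_word false t) (alt_word false (rev t)).
Proof.
elim: k t => [|k IH] [|x [|y t]] //= [hs] /all_conj_cons[hx /all_conj_cons[hy ht]].
have [A _] := alt_word_medial hs ht.
rewrite -[alt_word false t]cats0 A // cats0 !rev_cons -!cats1 -catA alt_word_cat.
by rewrite size_rev hs /= odd_double /= cats0 IH.
Qed.

Lemma flatten_alt_term (c : nat -> word D) l b :
  (forall k, k < size l -> odd (nth 0 l k) = b (+) odd k) ->
  flatten [seq alt_term c i | i <- l] = alt_word b (map c l).
Proof.
elim: l b => [|i l IH] b //= Hl.
have -> : alt_term c i = if b then winv (c i) else c i.
  by rewrite /alt_term; have := Hl 0 isT; rewrite addbF => ->.
rewrite (IH (~~ b)) // => k hk.
by have := Hl k.+1 hk; rewrite /= addNb -addbN.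
Qed.

End MedialGroup.

Theorem lemma27 (D : diagram) (n : nat) (hn : 3 <= n) (hodd : odd n)
    (a : nat -> darc D) (w : nat -> word D) :
  let c := fun i => conjw (w i) (a i) in
  mg_eq (alt_prod n c) (alt_prod_rev n c).
Proof.
move=> c.
have hconj l : all_conj (map c l).
  by move=> x /mapP[i _ ->]; exists (w i), (a i).
have hsize : size (map c (iota 0 n)) = (n./2).*2.+1.
  by rewrite size_map size_iota -{1}(odd_double_half n) hodd.
rewrite /alt_prod /alt_prod_rev !(@flatten_alt_term _ c _ false); first last.
- by move=> k; rewrite size_iota => hk; rewrite nth_iota.
- move=> k; rewrite size_rev size_iota => hk.
  rewrite nth_rev ?size_iota // nth_iota; last by lia.
  by rewrite add0n oddB // hodd /=; case: (odd k).
by rewrite map_rev; apply: alt_word_rev hsize (hconj _).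
Qed.
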